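(* Let $R$ be a ring and let $a\in R$ be regular. If (1) the right $R$-module $aR/ar(a^2)$ is projective and (2) $ar(a^2)\cong R/\big(r(a)+aR\big)$ as right $R$-modules, then $a$ is special clean, i.e., there exists an idempotent $e\in R$ such that $a-e$ is a unit of $R$ and $aR\cap eR=0$.
   Context: All rings are associative with identity; modules are right modules. An element $x\in R$ is regular if $x=xyx$ for some $y\in R$. For $x\in R$, $r(x)=\{y\in R: xy=0\}$, and $ar(a^2)=\{ay: y\in r(a^2)\}$. *)

From HB Require Import structures.
From mathcomp Require Import all_boot all_algebra.
Set Implicit Arguments. Unset Strict Implicit. Unset Printing Implicit Defensive.
Import GRing.Theory.
Local Open Scope ring_scope.

(* Rings: associative with identity (pzRingType allows also the zero ring).
   Subsets of R are Prop-valued predicates R -> Prop. *)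

Section RingDefs.
Variable R : pzRingType.

Definition regular (x : R) : Prop := exists y, x = x * y * x.

Definition is_unit (u : R) : Prop := exists v, u * v = 1 /\ v * u = 1.

Definition rann (x : R) : R -> Prop := fun y => x * y = 0.
Definition princ (x : R) : R -> Prop := fun z => exists y, z = x * y.
Definition a_ra2 (a : R) : R -> Prop := fun z => exists y, rann (a ^+ 2) y /\ z = a * y.
Definition isum (I J : R -> Prop) : R -> Prop :=
  fun z => exists i j, I i /\ J j /\ z = i + j.
Definition zero_set : R -> Prop := fun z => z = 0.
Definition full_set : R -> Prop := fun _ => True.

End RingDefs.

Record rmodule (R : pzRingType) := RModule {
  rm_car :> zmodType;
  rm_act : rm_car -> R -> rm_car;
  rm_actDl : forall (x y : rm_car) r, rm_act (x + y) r = rm_act x r + rm_act y r;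
  rm_actDr : forall (x : rm_car) r s, rm_act x (r + s) = rm_act x r + rm_act x s;
  rm_actA : forall (x : rm_car) r s, rm_act x (r * s) = rm_act (rm_act x r) s;
  rm_act1 : forall x : rm_car, rm_act x 1 = x
}.

Section ModDefs.
Variable R : pzRingType.

Definition is_rhom (M N : rmodule R) (f : M -> N) : Prop :=
  (forall x y, f (x + y) = f x + f y) /\
  (forall x r, f (rm_act x r) = rm_act (f x) r).

(* A subquotient A/B of R_R, with B <= A right ideals, is represented by the
   pair (A, B).  A homomorphism A/B -> M is represented by a map f : R -> M
   which is additive and R-linear on A and vanishes on B (i.e. a homomorphism
   A -> M whose kernel contains B); two such maps represent the same
   homomorphism iff they agree on A. *)
Definition is_sq_hom (A B : R -> Prop) (M : rmodule R) (f : R -> M) : Prop :=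
  (forall x y, A x -> A y -> f (x + y) = f x + f y) /\
  (forall x r, A x -> f (x * r) = rm_act (f x) r) /\
  (forall x, B x -> f x = 0).

Definition sq_projective (A B : R -> Prop) : Prop :=
  forall (N P : rmodule R) (g : N -> P), is_rhom g ->
    (forall p : P, exists n : N, g n = p) ->
  forall h : R -> P, is_sq_hom A B h ->
    exists k : R -> N, is_sq_hom A B k /\ (forall x, A x -> g (k x) = h x).

(* A1/B1 ~= A2/B2 as right R-modules: a map f : R -> R sending A1 into A2
   which induces an isomorphism A1/B1 -> A2/B2 (well defined, additive,
   R-linear, injective and surjective modulo B2). *)
Definition sq_iso (A1 B1 A2 B2 : R -> Prop) : Prop :=
  exists f : R -> R,
    (forall x, A1 x -> A2 (f x)) /\
    (forall x y, A1 x -> A1 y -> B2 (f (x + y) - (f x + f y))) /\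
    (forall x r, A1 x -> B2 (f (x * r) - f x * r)) /\
    (forall x, B1 x -> B2 (f x)) /\
    (forall x, A1 x -> B2 (f x) -> B1 x) /\
    (forall y, A2 y -> exists x, A1 x /\ B2 (f x - y)).

Definition special_clean (a : R) : Prop :=
  exists e : R, e * e = e /\ is_unit (a - e) /\
    (forall x, princ a x -> princ e x -> x = 0).

End ModDefs.

From HB Require Import structures.
From mathcomp Require Import all_boot all_algebra boolp.
Set Implicit Arguments. Unset Strict Implicit. Unset Printing Implicit Defensive.
Import GRing.Theory.
Local Open Scope ring_scope.

(* Write a = aba and p = ab, an idempotent with pR = aR.  Projectivity of
   aR/ar(a^2) lets left multiplication by a, seen as a map aR -> a^2R, factor
   through R -> a^2R, and this produces an idempotent m with mR = ar(a^2), so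
   that ar(a^2) is a direct summand of aR.  Transporting the idempotent m along
   the isomorphism f : ar(a^2) ~ R/(r(a) + aR) gives t = (1 - p) f(m) m, with
   ptR = 0 and tR + r(a) + aR = R; then e = 1 - p - t is an idempotent with
   aR /\ eR = 0, and a - e is injective (r(a) /\ r(e) = 0) and surjective. *)

Section RightModules.
Variable R : pzRingType.

Definition regular_rmodule : rmodule R :=
  @RModule R R *%R (@mulrDl R) (@mulrDr R) (@mulrA R) (@mulr1 R).

Section PrincipalRightIdeal.
Variable c : R.

Definition princ_pred : pred R := fun x => `[< princ c x >].

Lemma princ_predP x : reflect (princ c x) (princ_pred x).
Proof. exact: asboolP. Qed.

Fact princ_pred_zmod_closed : zmod_closed princ_pred.
Proof.
split=> [|_ _ /princ_predP[u ->] /princ_predP[v ->]]; apply/princ_predP.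
  by exists 0; rewrite mulr0.
by exists (u - v); rewrite mulrBr.
Qed.

HB.instance Definition _ :=
  GRing.isZmodClosed.Build R princ_pred princ_pred_zmod_closed.

Definition princ_sub := {x : R | princ_pred x}.
HB.instance Definition _ := SubType.on princ_sub.
HB.instance Definition _ := Choice.on princ_sub.
HB.instance Definition _ := [SubChoice_isSubZmodule of princ_sub by <:].

Lemma princ_predM x r : princ_pred x -> princ_pred (x * r).
Proof.
by move=> /princ_predP[u ->]; apply/princ_predP; exists (u * r); rewrite mulrA.
Qed.

Definition princ_act (x : princ_sub) (r : R) : princ_sub :=
  Sub (val x * r) (princ_predM r (valP x)).

Fact princ_actDl (x y : princ_sub) r :
  princ_act (x + y) r = princ_act x r + princ_act y r.
Proof. by apply: val_inj; rewrite /= mulrDl. Qed.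

Fact princ_actDr (x : princ_sub) r s :
  princ_act x (r + s) = princ_act x r + princ_act x s.
Proof. by apply: val_inj; rewrite /= mulrDr. Qed.

Fact princ_actA (x : princ_sub) r s :
  princ_act x (r * s) = princ_act (princ_act x r) s.
Proof. by apply: val_inj; rewrite /= mulrA. Qed.

Fact princ_act1 (x : princ_sub) : princ_act x 1 = x.
Proof. by apply: val_inj; rewrite /= mulr1. Qed.

Definition princ_rmodule : rmodule R :=
  @RModule R princ_sub princ_act princ_actDl princ_actDr princ_actA princ_act1.

End PrincipalRightIdeal.
End RightModules.

Lemma lreg_rinv_is_unit (R : pzRingType) (w : R) :
  (forall x, w * x = 0 -> x = 0) -> (exists s, w * s = 1) -> is_unit w.
Proof.
move=> wreg [s ws]; exists s; split=> //.
apply/eqP; rewrite -subr_eq0; apply/eqP; apply: wreg.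
by rewrite mulrBr mulrA ws mul1r mulr1 subrr.
Qed.

Section RannAddPrinc.
Variables (R : pzRingType) (a : R).

Definition J := isum (rann a) (princ a).

Lemma JD x y : J x -> J y -> J (x + y).
Proof.
move=> [i [_ [hi [[u ->] ->]]]] [i' [_ [hi' [[u' ->] ->]]]].
exists (i + i'), (a * (u + u')); split; last split.
- by rewrite /rann mulrDr hi hi' addr0.
- by exists (u + u').
- by rewrite mulrDr addrACA.
Qed.

Lemma JN x : J x -> J (- x).
Proof.
move=> [i [_ [hi [[u ->] ->]]]].
exists (- i), (a * - u); split; last split.
- by rewrite /rann mulrN hi oppr0.
- by exists (- u).
- by rewrite mulrN opprD.
Qed.

Lemma JB x y : J x -> J y -> J (x - y).
Proof. by move=> Jx Jy; apply: JD => //; apply: JN. Qed.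

Lemma J_trans x y z : J (x - y) -> J (y - z) -> J (x - z).
Proof. by move=> Jxy Jyz; rewrite -[x](subrK y) -addrA; apply: JD. Qed.

Lemma J_sym x y : J (x - y) -> J (y - x).
Proof. by move=> Jxy; rewrite -opprB; apply: JN. Qed.

Lemma J_rann x : a * x = 0 -> J x.
Proof.
by move=> ax; exists x, 0; split; last split; [|exists 0; rewrite mulr0|rewrite addr0].
Qed.

Lemma J_princ z : J (a * z).
Proof.
by exists 0, (a * z); split; last split; [rewrite /rann mulr0|exists z|rewrite add0r].
Qed.

End RannAddPrinc.

Lemma a_ra2M (R : pzRingType) (a x r : R) : a_ra2 a x -> a_ra2 a (x * r).
Proof.
move=> [z [a2z ->]]; exists (z * r); split; last by rewrite mulrA.
by rewrite /rann mulrA a2z mul0r.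
Qed.

Section Splitting.
Variables (R : pzRingType) (a b : R).
Hypothesis aba : a = a * b * a.

Let aba_id : a * b * a = a. Proof. by rewrite -aba. Qed.
Let ab_idem : a * b * (a * b) = a * b. Proof. by rewrite mulrA aba_id. Qed.

Lemma projective_lift : sq_projective (princ a) (a_ra2 a) ->
  exists g, g * (a * b) = g /\ a * a * g = a * a * b /\
    (forall z, a * (a * z) = 0 -> g * (a * z) = 0).
Proof.
move=> proj.
have a2R n : princ_pred (a * a) (a * a * n) by apply/princ_predP; exists n.
pose mul_a2 (n : regular_rmodule R) : princ_rmodule (a * a) := Sub _ (a2R n).
(* on aR, x |-> a^2 b x is left multiplication by a *)
pose h (x : R) : princ_rmodule (a * a) := Sub _ (a2R (b * x)).
have mul_a2_hom : is_rhom mul_a2.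
  by split=> [x y|x r]; apply: val_inj; rewrite /= ?mulrDr ?mulrA.
have mul_a2_onto (y : princ_rmodule (a * a)) : exists n, mul_a2 n = y.
  by have /princ_predP[n yn] := valP y; exists n; apply: val_inj; rewrite /= yn.
have h_hom : is_sq_hom (princ a) (a_ra2 a) h.
  split; last split.
  - by move=> x y _ _; apply: val_inj; rewrite /= !mulrDr.
  - by move=> x r _; apply: val_inj; rewrite /= !mulrA.
  - move=> _ [y [a2y ->]]; apply: val_inj => /=.
    by rewrite (mulrA b) (mulrA (a * a)) -(mulrA a a) (mulrA a b) -aba -expr2.
have [k [[_ [klin k0]] kh]] := proj _ _ _ mul_a2_hom mul_a2_onto h h_hom.
have kM x : princ a x -> k x = k (a * b) * x.
  move=> [y ->]; have aby : a * y = a * b * (a * y) by rewrite mulrA aba_id.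
  by rewrite {1}aby klin //; exists b.
exists (k (a * b)); split; last split.
- by rewrite -kM //; exists b.
- have /(congr1 val) /= -> := kh (a * b) (ex_intro _ b erefl).
  by rewrite -mulrA (mulrA a b) ab_idem mulrA.
- move=> z a2z; rewrite -kM; last by exists z.
  by apply: k0; exists z; split; rewrite // /rann expr2 -mulrA.
Qed.

Lemma splitting_idempotent : sq_projective (princ a) (a_ra2 a) ->
  exists m, m * m = m /\ a * b * m = m /\ m * (a * b) = m /\ a * m = 0 /\
    (forall z, a * (a * z) = 0 -> m * (a * z) = a * z).
Proof.
move=> /projective_lift[g [gp [a2g gz]]].
have gag : g * (a * g) = g.
  have az : a * (b * a * g - b) = a * g - a * b by rewrite mulrBr !mulrA aba_id.
  apply/eqP; rewrite -subr_eq0 -{3}gp -mulrBr -az; apply/eqP/gz.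
  by rewrite az mulrBr !mulrA a2g subrr.
have ag_idem : a * g * (a * g) = a * g by rewrite -mulrA gag.
have pag : a * b * (a * g) = a * g by rewrite mulrA aba_id.
have agp : a * g * (a * b) = a * g by rewrite -mulrA gp.
have a_ag : a * (a * g) = a * (a * b) by rewrite !mulrA a2g.
exists (a * b - a * g); split; last split; last split; last split.
- by rewrite mulrBl !mulrBr ab_idem pag agp ag_idem subrr subr0.
- by rewrite mulrBr ab_idem pag.
- by rewrite mulrBl ab_idem agp.
- by rewrite mulrBr a_ag subrr.
- by move=> z a2z; rewrite mulrBl -(mulrA a g) gz // mulr0 subr0 mulrA aba_id.
Qed.

End Splitting.

Section SpecialClean.
Variables (R : pzRingType) (a b p m : R) (f : R -> R).
Hypotheses (pa : p * a = a) (p_idem : p * p = p) (pab : forall x, p * x = a * (b * x)).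
Hypotheses (m_idem : m * m = m) (pm : p * m = m) (mp : m * p = m) (am : a * m = 0).
Hypothesis m_fix : forall z, a * (a * z) = 0 -> m * (a * z) = a * z.
Hypothesis fM : forall x r, a_ra2 a x -> J a (f (x * r) - f x * r).
Hypothesis f_inj : forall x, a_ra2 a x -> J a (f x) -> x = 0.
Hypothesis f_onto : forall y, exists x, a_ra2 a x /\ J a (f x - y).

Let q_idem : (1 - p) * (1 - p) = 1 - p.
Proof. by rewrite mulrBl mul1r mulrBr mulr1 p_idem subrr subr0. Qed.

Lemma m_a_ra2 : a_ra2 a m.
Proof.
exists (b * m); split; last by rewrite -pab pm.
by rewrite /rann expr2 -mulrA -pab pm am.
Qed.

Lemma m_fix_a_ra2 x : a_ra2 a x -> m * x = x.
Proof. by move=> [z [a2z ->]]; apply: m_fix; move: a2z; rewrite /rann expr2 mulrA. Qed.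

Let t := (1 - p) * f m * m.

Let pt : p * t = 0.
Proof. by rewrite /t !mulrA mulrBr mulr1 p_idem subrr !mul0r. Qed.
Let tm : t * m = t.
Proof. by rewrite /t -mulrA m_idem. Qed.
Let mt : m * t = 0.
Proof. by rewrite /t !mulrA mulrBr mulr1 mp subrr !mul0r. Qed.
Let tp : t * p = t.
Proof. by rewrite /t -mulrA mp. Qed.
Let qt : (1 - p) * t = t.
Proof. by rewrite mulrBl mul1r pt subr0. Qed.

Lemma J_t_sub_fm y : J a (t * y - f m * (m * y)).
Proof.
have -> : t * y - f m * (m * y) = a * - (b * (f m * (m * y))).
  by rewrite mulrN -pab /t -!mulrA mulrBl mul1r addrAC subrr add0r.
exact: J_princ.
Qed.

Lemma m_ann_of_J_t y : J a (t * y) -> m * y = 0.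
Proof.
move=> Jty; apply: f_inj; first exact: a_ra2M m_a_ra2.
have := fM (m * y) m_a_ra2; rewrite mulrA m_idem => Jf.
rewrite -[f _]subr0; apply: J_trans Jf _; apply: J_trans (J_sym (J_t_sub_fm y)) _.
by rewrite subr0.
Qed.

Lemma J_t_cover y : exists s, J a (y - t * s).
Proof.
have [x [x_ra2 Jfx]] := f_onto y; exists x.
have := fM x m_a_ra2; rewrite (m_fix_a_ra2 x_ra2) => Jfm.
have := J_t_sub_fm x; rewrite (m_fix_a_ra2 x_ra2) => Jt.
by apply: J_trans (J_sym Jfx) _; apply: J_trans Jfm (J_sym Jt).
Qed.

Let e := 1 - p - t.

Let pe : p * e = 0.
Proof. by rewrite /e !mulrBr mulr1 p_idem pt !subrr. Qed.
Let te : t * e = 0.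
Proof.
have tt : t * t = 0 by rewrite -{1}tm -mulrA mt mulr0.
by rewrite /e !mulrBr mulr1 tp tt !subrr.
Qed.
Let e_idem : e * e = e.
Proof. by rewrite {1}/e !mulrBl mul1r pe te !subr0. Qed.
Let qe : (1 - p) * e = e.
Proof. by rewrite mulrBl mul1r pe subr0. Qed.

Lemma rann_rann_e x : a * x = 0 -> e * x = 0 -> x = 0.
Proof.
move=> ax /eqP; rewrite /e !mulrBl mul1r subr_eq0 => /eqP tx.
have mx : m * x = 0.
  by apply: m_ann_of_J_t; rewrite -tx pab; apply: JB; [apply: J_rann | apply: J_princ].
have px : p * x = x.
  by apply/eqP; rewrite eq_sym -subr_eq0 tx -tm -mulrA mx mulr0.
by rewrite -px pab -m_fix -?pab px ?mx ?ax.
Qed.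

Lemma e_rann_onto y : (1 - p) * y = y -> exists x, a * x = 0 /\ e * x = y.
Proof.
move=> qy; have [s [i [_ [ai [[z ->] Jy]]]]] := J_t_cover y.
exists (i - m * i - m * s); split.
  by rewrite !mulrBr ai !mulrA am !mul0r !subr0.
have qm : (1 - p) * m = 0 by rewrite mulrBl mul1r pm subrr.
have qa : (1 - p) * a = 0 by rewrite mulrBl mul1r pa subrr.
have -> : y = t * s + (1 - p) * i.
  rewrite -qy -[y](subrK (t * s)) Jy !mulrDr (mulrA _ t) qt (mulrA _ a) qa.
  by rewrite mul0r addr0 addrC.
by rewrite /e mulrBl !mulrBr !mulrA qm tm !mul0r !subr0 subrr sub0r opprK addrC.
Qed.

Lemma special_clean_of_splitting : special_clean a.
Proof.
exists e; split=> //; split; last first.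
  move=> _ [y ->] [z aye].
  by rewrite -[a]pa -mulrA aye mulrA pe mul0r.
apply: lreg_rinv_is_unit.
  move=> x aex; have ax : a * x = 0.
    by have := congr1 (fun z => p * z) aex; rewrite /= mulrA mulrBr pa pe subr0 mulr0.
  by apply: (rann_rann_e ax); move/eqP: aex; rewrite mulrBl ax sub0r oppr_eq0 => /eqP.
have [x [ax ex]] : exists x, a * x = 0 /\ e * x = - (1 - p) - e * (b * p).
  by apply: e_rann_onto; rewrite mulrBr mulrN q_idem !mulrA qe.
exists (b * p + x).
rewrite mulrBl !mulrDr ex ax addr0 -pab p_idem.
by rewrite [e * (b * p) + _]addrC subrK opprK addrC subrK.
Qed.

End SpecialClean.

Theorem lemma3p2 (R : pzRingType) (a : R) :
  regular a ->
  sq_projective (princ a) (a_ra2 a) ->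
  sq_iso (a_ra2 a) (@zero_set R) (@full_set R) (isum (rann a) (princ a)) ->
  special_clean a.
Proof.
move=> [b aba] proj [f [_ [_ [fM [_ [f_inj f_onto]]]]]].
have [m [m_idem [pm [mp [am m_fix]]]]] := splitting_idempotent aba proj.
apply: (special_clean_of_splitting _ _ _ m_idem pm mp am m_fix fM f_inj).
- by rewrite -aba.
- by rewrite mulrA -aba.
- by move=> x; rewrite mulrA.
- by move=> y; apply: f_onto.
Qed.
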